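(* $\mathfrak{Z}(\mathcal{S})\leq(2^{\aleph_0})^+$; that is, every separable LMP $\mathbb{S}$ satisfies $\mathfrak{Z}(\mathbb{S})\leq(2^{\aleph_0})^+$.
   Context: An LMP is a triple $\mathbb{S}=(S,\Sigma,\{\tau_a\mid a\in L\})$ with $(S,\Sigma)$ a measurable space, $L$ a countable label set, and each $\tau_a:S\times\Sigma\to[0,1]$ a Markov kernel (subprobability measure in the second argument, measurable in the first). It is separable if $\Sigma$ is countably generated and separates points of $S$. For $R\subseteq S\times S$, $\Sigma(R)$ is the family of $R$-closed sets in $\Sigma$ ($A$ is $R$-closed if $x\in A$, $xRs$ imply $s\in A$). $\mathcal{R}(\Gamma)=\{(s,t):\forall A\in\Gamma\,(s\in A\iff t\in A)\}$; $\mathcal{R}^T(\Lambda)=\{(s,t):\forall a\,\forall E\in\Lambda\ \tau_a(s,E)=\tau_a(t,E)\}$; $\mathcal{O}(R)=\mathcal{R}^T(\Sigma(R))$, with iterates $\mathcal{O}^0(R)=R$, $\mathcal{O}^{\alpha+1}(R)=\mathcal{O}(\mathcal{O}^\alpha(R))$, $\mathcal{O}^\lambda(R)=\bigcap_{\alpha<\lambda}\mathcal{O}^\alpha(R)$ for limit $\lambda$. Event bisimilarity ${\sim_e}=\mathcal{R}(\sigma(\llbracket\mathcal{L}\rrbracket))$, where $\sigma(\llbracket\mathcal{L}\rrbracket)$ is the $\sigma$-algebra generated by the denotations of formulas $\phi::=\top\mid\phi\wedge\psi\mid\langle a\rangle_{>q}\phi$ ($q\in\mathbb{Q}\cap[0,1]$),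 $\llbracket\langle a\rangle_{>q}\phi\rrbracket=\{s:\tau_a(s,\llbracket\phi\rrbracket)>q\}$. A state bisimulation is a symmetric $R$ with $sRt$, $C\in\Sigma(R)$ implying $\tau_a(s,C)=\tau_a(t,C)$ for all $a$; state bisimilarity $\sim_s$ is the union of all state bisimulations. The Zhou ordinal $\mathfrak{Z}(\mathbb{S})$ is the least $\alpha$ with $\mathcal{O}^\alpha(\sim_e)={\sim_s}$ (it exists). $\mathfrak{Z}(\mathcal{S})$ is the supremum of $\mathfrak{Z}(\mathbb{S})$ over all separable LMPs $\mathbb{S}$. *)

From HB Require Import structures.
From mathcomp Require Import all_boot all_order all_algebra.
From mathcomp Require Import all_classical all_reals.
From mathcomp Require Import ereal measure kernel.
Set Implicit Arguments. Unset Strict Implicit. Unset Printing Implicit Defensive.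
Import Order.TTheory GRing.Theory Num.Theory.
Local Open Scope classical_set_scope.
Local Open Scope ring_scope.
Local Open Scope card_scope.

Section LMP.
Context {d : measure_display} {T : measurableType d} {R : realType}
  {L : countType} (tau : L -> R.-spker T ~> T).

Definition relT := T -> T -> Prop.

Definition closed_by (Rel : relT) (A : set T) := forall x s, A x -> Rel x s -> A s.

Definition SigmaR (Rel : relT) : set (set T) :=
  [set A | measurable A /\ closed_by Rel A].

Definition RelOf (Gamma : set (set T)) : relT :=
  fun s t => forall A, Gamma A -> (A s <-> A t).

Definition RelT (Lambda : set (set T)) : relT :=
  fun s t => forall a E, Lambda E -> tau a s E = tau a t E.

Definition Oop (Rel : relT) : relT := RelT (SigmaR Rel).

Inductive formula :=
| fTop : formula
| fAnd : formula -> formula -> formula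
| fDiam : L -> rat -> formula -> formula.

Fixpoint wf_formula (f : formula) : Prop :=
  match f with
  | fTop => True
  | fAnd f1 f2 => wf_formula f1 /\ wf_formula f2
  | fDiam _ q g => (0 <= q <= 1)%R /\ wf_formula g
  end.

Fixpoint denot (f : formula) : set T :=
  match f with
  | fTop => setT
  | fAnd f1 f2 => denot f1 `&` denot f2
  | fDiam a q g => [set s | ((ratr q)%:E < tau a s (denot g))%E]
  end.

Definition event_bisim : relT :=
  RelOf (<<s [set denot f | f in wf_formula] >>).

Definition state_bisimulation (Rel : relT) :=
  (forall s t, Rel s t -> Rel t s) /\
  (forall s t C a, Rel s t -> SigmaR Rel C -> tau a s C = tau a t C).

Definition state_bisim : relT :=
  fun s t => exists Rel, state_bisimulation Rel /\ Rel s t.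

End LMP.

Definition separable {d : measure_display} (T : measurableType d) :=
  (exists G : set (set T), countable G /\ (@measurable d T) = <<s G >>) /\
  (forall x y : T, x <> y -> exists A, measurable A /\ A x /\ ~ A y).

Definition strict_wellorder {W : Type} (lt : W -> W -> Prop) :=
  well_founded lt /\
  (forall i j k, lt i j -> lt j k -> lt i k) /\
  (forall i j, lt i j \/ i = j \/ lt j i).

(* F is the transfinite iteration O^i(R0) along the well-order lt:
   O^0 = R0, O^(p+1) = O(O^p), O^lambda = intersection of earlier ones. *)
Definition is_transfinite_iter {W : Type} (lt : W -> W -> Prop) {X : Type}
  (O : (X -> X -> Prop) -> (X -> X -> Prop)) (R0 : X -> X -> Prop)
  (F : W -> X -> X -> Prop) :=
  forall i,
    ((forall j, ~ lt j i) -> F i = R0) /\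
    (forall p, lt p i -> (forall j, lt j i -> j = p \/ lt j p) -> F i = O (F p)) /\
    ((exists j, lt j i) -> (forall p, lt p i -> exists j, lt p j /\ lt j i) ->
       F i = fun s t => forall j, lt j i -> F j s t).

(* (W, lt) has order type (2^aleph0)^+ + 1 with greatest element top:
   the segment below top has cardinality > 2^aleph0, every proper
   initial segment below top has cardinality <= 2^aleph0. *)
Definition order_type_succ_cont_plus_one {W : Type} (lt : W -> W -> Prop)
  (top : W) :=
  strict_wellorder lt /\
  (forall i, i = top \/ lt i top) /\
  ~ ([set j | lt j top] #<= [set: nat -> bool]) /\
  (forall i, lt i top -> [set j | lt j i] #<= [set: nat -> bool]).

From HB Require Import structures.
From mathcomp Require Import all_boot all_order all_algebra.
From mathcomp Require Import all_classical all_reals.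
From mathcomp Require Import ereal measure kernel measurable_realfun.

(* 1. Every stage F i of the iteration is an "upper approximation" of ~s:
      it contains ~s, is symmetric and satisfies O(F i) <= F i.  This holds
      for ~e, is preserved by O and by intersections, so it propagates along
      the transfinite induction; in particular the stages decrease.
   2. An upper approximation that is also a post-fixpoint of O (Rel <= O Rel)
      is a state bisimulation, hence equals ~s.
   3. So if no stage equals ~s, each stage strictly drops at its successor;
      choosing a pair (x, y) in F i \ F (i+1) for every i gives an injection
      of the ordinals below the top element into T * T.
   4. Separability makes T * T inject into 2^N (points are determined by the
      countable generators that contain them), which contradicts the
      assumption that the segment below the top has size > 2^aleph0. *)

Set Implicit Arguments. Unset Strict Implicit. Unset Printing Implicit Defensive.
Local Open Scope classical_set_scope.

Definition subrel {X : Type} (R1 R2 : X -> X -> Prop) :=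
  forall s t, R1 s t -> R2 s t.

(* Two points that agree on every generator agree on the generated
   sigma-algebra, since the sets on which they agree form a sigma-algebra. *)
Lemma sigma_agree {T : Type} (G : set (set T)) x y :
  (forall A, G A -> (A x <-> A y)) -> forall A, <<s G >> A -> (A x <-> A y).
Proof.
move=> agreeG; apply: (@smallest_sub _ _ _ [set A | A x <-> A y]) => //.
split=> //.
- move=> A /= [Ax Ay].
  by split=> -[_ nA]; split=> // ?; apply: nA; [exact: Ay|exact: Ax].
- by move=> F agreeF; split=> -[n _ Fn]; exists n => //; apply agreeF.
Qed.

Section Bisimulations.
Context {d : measure_display} {T : measurableType d} {R : realType}
  {L : countType} (tau : L -> R.-spker T ~> T).

(* Denotations are measurable, the modal case by measurability of kernels. *)
Lemma measurable_denot f : measurable (denot tau f).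
Proof.
elim: f => [|f1 IH1 f2 IH2|a q g IH] /=.
- exact: measurableT.
- exact: measurableI.
- have := measurable_kernel (tau a) _ IH measurableT
    `]((ratr q)%:E), +oo[%classic (emeasurable_itv _).
  rewrite setTI; congr measurable; apply/seteqP; split=> x /=;
  by rewrite in_itv /= andbT.
Qed.

Lemma sigma_algebra_SigmaR (Rel : T -> T -> Prop) :
  (forall s t, Rel s t -> Rel t s) -> sigma_algebra setT (SigmaR Rel).
Proof.
move=> sym; split.
- by split=> // x s [].
- move=> A [mA cA]; split; first exact: measurableD.
  move=> x s [_ nA] xs; split=> // As; apply: nA; exact: cA (sym _ _ xs).
- move=> F closedF; split.
    by apply: bigcup_measurable => n _; case: (closedF n).
  move=> x s [n _ Fn] xs; exists n => //; case: (closedF n) => _ cF; exact: cF xs.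
Qed.

Lemma denot_closed (Rel : T -> T -> Prop) : state_bisimulation tau Rel ->
  forall f, closed_by Rel (denot tau f).
Proof.
move=> [_ bis]; elim=> [|f1 IH1 f2 IH2|a q g IH] //=.
- by move=> x s [h1 h2] xs; split; [apply: IH1 xs|apply: IH2 xs].
- move=> x s /= h xs; rewrite -(bis _ _ _ a xs) //.
  by split=> //; exact: measurable_denot.
Qed.

(* ~s <= ~e: the sigma-algebra generated by the denotations consists of
   measurable sets closed under every state bisimulation. *)
Lemma state_event : subrel (state_bisim tau) (event_bisim tau).
Proof.
move=> s t [Rel [[sym bis] Rst]].
have sub : <<s [set denot tau f | f in (@wf_formula L)] >> `<=` SigmaR Rel.
  apply: smallest_sub; first exact: sigma_algebra_SigmaR.
  move=> _ [f _ <-]; split; first exact: measurable_denot.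
  exact: denot_closed.
by move=> A /sub [_ cA]; split=> h; [exact: cA h Rst|exact: cA h (sym _ _ Rst)].
Qed.

(* O(~e) <= ~e: states O(~e)-related satisfy the same formulas, by induction
   on formulas, since every denotation is ~e-closed and measurable. *)
Lemma O_event : subrel (Oop tau (event_bisim tau)) (event_bisim tau).
Proof.
move=> s t h.
have gen g : wf_formula g ->
    <<s [set denot tau f | f in (@wf_formula L)] >> (denot tau g).
  by move=> wg; apply: sub_sigma_algebra; exists g.
have same f : wf_formula f -> (denot tau f s <-> denot tau f t).
  elim: f => [|f1 IH1 f2 IH2|a q g IH] //=.
  - by move=> [w1 w2]; split=> -[h1 h2]; split; by [apply/IH1|apply/IH2].
  - move=> [_ wg]; rewrite (h a (denot tau g)) //; split.
      exact: measurable_denot.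
    by move=> x y gx xy; have /iffLR := xy _ (gen g wg); apply.
by apply: sigma_agree => _ [f wf <-]; exact: same.
Qed.

(* O is monotone: a larger relation has fewer closed sets to test. *)
Lemma O_mono (R1 R2 : T -> T -> Prop) :
  subrel R1 R2 -> subrel (Oop tau R1) (Oop tau R2).
Proof.
move=> sub s t h a E [mE cE]; apply: h; split=> // x y Ex xy.
exact: cE Ex (sub _ _ xy).
Qed.

Definition upper_approx (Rel : T -> T -> Prop) :=
  [/\ subrel (state_bisim tau) Rel, (forall s t, Rel s t -> Rel t s)
    & subrel (Oop tau Rel) Rel].

Lemma upper_approx_event : upper_approx (event_bisim tau).
Proof.
split; [exact: state_event| |exact: O_event].
by move=> s t h A GA; split=> /(h A GA).
Qed.

Lemma upper_approx_O (Rel : T -> T -> Prop) :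
  upper_approx Rel -> upper_approx (Oop tau Rel).
Proof.
move=> [stateR _ ORel]; split.
- move=> s t [Rs [bisRs Rst]] a E [mE cE]; apply: bisRs.2 Rst _.
  split=> // x y Ex xy; apply: cE Ex _; apply: stateR; exists Rs.
  by split.
- by move=> s t h a E HE; rewrite (h a E HE).
- exact: O_mono.
Qed.

Lemma upper_approx_meet {I : Type} (P : I -> Prop) (G : I -> T -> T -> Prop) :
  (forall j, P j -> upper_approx (G j)) ->
  upper_approx (fun s t => forall j, P j -> G j s t).
Proof.
move=> ua; split.
- by move=> s t st j Pj; have [+ _ _] := ua j Pj; apply.
- by move=> s t st j Pj; have [_ + _] := ua j Pj; apply; apply: st.
- move=> s t h j Pj; have [_ _ +] := ua j Pj; apply.
  by apply: O_mono h => x y; exact.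
Qed.

(* An upper approximation that is an O-post-fixpoint is a state bisimulation
   containing ~s, hence it is ~s. *)
Lemma upper_approx_fixpoint (Rel : T -> T -> Prop) :
  upper_approx Rel -> subrel Rel (Oop tau Rel) -> Rel = state_bisim tau.
Proof.
move=> [stateR sym _] post.
apply/funext => s; apply/funext => t; apply/propext; split; last exact: stateR.
move=> Rst; exists Rel; split=> //; split=> // x y C a xy HC.
exact: post.
Qed.

End Bisimulations.

Section WellOrders.
Context {W : Type} (lt : W -> W -> Prop) (wo : strict_wellorder lt).

Lemma wf_min (P : W -> Prop) i :
  P i -> exists m, P m /\ forall k, lt k m -> ~ P k.
Proof.
case: wo => wf _ Pi; apply: contrapT => nomin.
suff : forall x, ~ P x by move=> /(_ i).
move=> x; elim: (wf x) => {}x _ IH Px; apply: nomin; exists x.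
by split=> [//|k kx Pk]; exact: IH kx Pk.
Qed.

Lemma zero_succ_limit i : (forall j, ~ lt j i) \/
  (exists p, lt p i /\ forall j, lt j i -> j = p \/ lt j p) \/
  ((exists j, lt j i) /\ forall p, lt p i -> exists j, lt p j /\ lt j i).
Proof.
have [_ [_ tri]] := wo.
have [ex|nex] := pselect (exists j, lt j i); last first.
  by left => j h; apply: nex; exists j.
have [|nsucc] := pselect (exists p, lt p i /\
  forall j, lt j i -> j = p \/ lt j p); first by right; left.
right; right; split=> // p pi; apply: contrapT => nabove; apply: nsucc.
exists p; split=> // j ji; case: (tri j p) => [|[|pj]]; [by right|by left|].
by exfalso; apply: nabove; exists j.
Qed.

Lemma succ_exists i k : lt i k -> exists s, lt i s /\
  (forall j, lt j s -> j = i \/ lt j i) /\ (forall j, lt i j -> j = s \/ lt s j).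
Proof.
move=> ik; have [s [is_ mins]] := wf_min (P := lt i) ik.
have [_ [_ tri]] := wo; exists s; split=> //; split=> j.
- by move=> js; case: (tri j i) => [|[|ij]]; [right|left|exfalso; exact: mins js ij].
- by move=> ij; case: (tri j s) => [js|[|]]; [exfalso; exact: mins js ij|left|right].
Qed.

Lemma chain_witness_inj {X : Type} (G : W -> X -> Prop) (S : set W)
    (wit : W -> X) :
  (forall i, S i -> G i (wit i) /\ forall j, lt i j -> ~ G j (wit i)) ->
  {in S &, injective wit}.
Proof.
move=> witP i k /set_mem Si /set_mem Sk e; have [_ [_ tri]] := wo.
case: (tri i k) => [ik|[//|ki]]; exfalso.
- by have [_ /(_ k ik)] := witP i Si; rewrite e; apply; case: (witP k Sk).
- by have [_ /(_ i ki)] := witP k Sk; rewrite -e; apply; case: (witP i Si).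
Qed.

End WellOrders.

Section Iteration.
Context {d : measure_display} {T : measurableType d} {R : realType}
  {L : countType} (tau : L -> R.-spker T ~> T).
Context {W : Type} (lt : W -> W -> Prop) (wo : strict_wellorder lt)
  (F : W -> T -> T -> Prop)
  (iter : is_transfinite_iter lt (Oop tau) (event_bisim tau) F).

Lemma upper_approx_iter j : upper_approx tau (F j).
Proof.
elim/(well_founded_ind wo.1): j => j IH; have [F0 [Fsucc Flim]] := iter j.
case: (zero_succ_limit wo j) => [zero|[[p [pj pmax]]|[ex lim]]].
- by rewrite F0 //; exact: upper_approx_event.
- by rewrite (Fsucc p pj pmax); apply: upper_approx_O; exact: IH.
- by rewrite (Flim ex lim); exact: upper_approx_meet.
Qed.

Lemma iter_antitone i j : lt i j -> subrel (F j) (F i).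
Proof.
elim/(well_founded_ind wo.1): j i => j IH i ij; have [_ [Fsucc Flim]] := iter j.
case: (zero_succ_limit wo j) => [zero|[[p [pj pmax]]|[ex lim]]].
- by exfalso; exact: zero ij.
- have [_ _ Odown] := upper_approx_iter p.
  rewrite (Fsucc p pj pmax) => s t /Odown Fp.
  by case: (pmax i ij) => [->|ip] //; exact: IH ip s t Fp.
- by rewrite (Flim ex lim) => s t; apply.
Qed.

Lemma iter_strict_drop i k : lt i k -> F i <> state_bisim tau ->
  exists x y, F i x y /\ forall j, lt i j -> ~ F j x y.
Proof.
move=> ik neq; have [s [is_ [smax sabove]]] := succ_exists wo ik.
have [_ [Fsucc _]] := iter s.
have [[x y] [Fixy nFsxy]] : exists p : T * T, F i p.1 p.2 /\ ~ F s p.1 p.2.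
  apply: contrapT => nodrop; apply: neq.
  apply: upper_approx_fixpoint; first exact: upper_approx_iter.
  move=> x y Fixy; rewrite -(Fsucc i is_ smax); apply: contrapT => nFs.
  by apply: nodrop; exists (x, y).
exists x, y; split=> // j ij Fj; apply: nFsxy.
by case: (sabove j ij) => [<-|sj] //; exact: iter_antitone sj _ _ Fj.
Qed.

End Iteration.

Definition interleave (a b : nat -> bool) : nat -> bool :=
  fun n => if odd n then b n./2 else a n./2.

Lemma interleave_inj a b a' b' :
  interleave a b = interleave a' b' -> a = a' /\ b = b'.
Proof.
move=> e; split; apply/funext => n.
- by have := congr1 (fun g => g n.*2) e; rewrite /interleave odd_double doubleK.
- have := congr1 (fun g => g n.*2.+1) e.
  by rewrite /interleave /= odd_double /= uphalf_double.
Qed.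

(* In a separable space a point is determined by which of the countably many
   generators contain it, which gives an injection into 2^N. *)
Lemma separable_inj {d : measure_display} {T : measurableType d} :
  separable T -> exists h : T -> (nat -> bool), injective h.
Proof.
move=> [[G [/countable_injP [idx idx_inj] mE]] sep].
pose code x n := `[< exists A, G A /\ idx A = n /\ A x >].
have codeP B z : G B -> code z (idx B) <-> B z.
  move=> GB; split; last by move=> Bz; apply/asboolP; exists B.
  move=> /asboolP [A [GA [eA Az]]].
  by rewrite -(idx_inj A B (mem_set GA) (mem_set GB) eA).
exists code => x y exy; apply: contrapT => nxy.
have [A [mA [Ax nAy]]] := sep x y nxy.
have agree B : G B -> (B x <-> B y).
  by move=> GB; rewrite -!(codeP B _ GB) exy.
rewrite mE in mA; apply: nAy; have /iffLR := sigma_agree agree mA; exact.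
Qed.

Theorem lemma4p5 (d : measure_display) (T : measurableType d) (R : realType)
  (L : countType) (tau : L -> R.-spker T ~> T)
  (W : Type) (lt : W -> W -> Prop) (top : W)
  (F : W -> T -> T -> Prop) :
  separable T ->
  order_type_succ_cont_plus_one lt top ->
  is_transfinite_iter lt (Oop tau) (event_bisim tau) F ->
  exists i : W, F i = state_bisim tau.
Proof.
move=> sepT [wo [_ [too_big _]]] iter.
have [h h_inj] := separable_inj sepT.
apply: contrapT => never; apply: too_big.
have drop i : exists p : T * T, lt i top ->
    F i p.1 p.2 /\ forall j, lt i j -> ~ F j p.1 p.2.
  have [it|nit] := pselect (lt i top); last by exists (point, point).
  have [|x [y dropxy]] := iter_strict_drop wo iter it.
    by move=> eq; apply: never; exists i.
  by exists (x, y).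
pose wit i := sval (cid (drop i)).
have wit_inj := chain_witness_inj wo (G := fun i p => F i p.1 p.2)
  (S := [set j | lt j top]) (wit := wit) (fun i => svalP (cid (drop i))).
apply/pcard_injP; exists (fun i => interleave (h (wit i).1) (h (wit i).2)).
move=> i k Si Sk /interleave_inj [/h_inj e1 /h_inj e2].
by apply: wit_inj => //; rewrite [wit i]surjective_pairing e1 e2 -surjective_pairing.
Qed.
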